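(* Let $k\ge2\sqrt2$ be real. For $x=e^{i\theta}$ on the unit circle (with $\cos\theta\ne0$) set $$y_{1}(x)=\frac{k+\sqrt{k^2-16\cos^2\theta\,(3-4\cos^2\theta)}}{4\cos\theta}.$$ Then $|y_1(x)|\ge1$ for all such $x$.
   Context: $y_1(x)$ is the root of larger absolute value in $y$ of $(x+x^{-1})y^2-ky-(x^3+x^{-3})=0$ (which equals $-y^3R_k(x/y,1/(xy))$ for $R_k(x,y)=y^3-y+x^3-x+kxy$). Here $\sqrt{\cdot}$ is the principal square root. *)

From HB Require Import structures.
From mathcomp Require Import all_boot all_order all_algebra.
From mathcomp Require Import complex.
From mathcomp Require Import reals trigo.
Set Implicit Arguments. Unset Strict Implicit. Unset Printing Implicit Defensive.
Import Order.TTheory GRing.Theory Num.Theory.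
Local Open Scope ring_scope.
Local Open Scope complex_scope.

Definition y1 (R : realType) (k theta : R) : R[i] :=
  let c := cos theta in
  ((k%:C + sqrtc ((k ^+ 2 - 16 * c ^+ 2 * (3 - 4 * c ^+ 2))%:C))
     / (4 * c)%:C).

(* Write y_1 = (k + s) / (4 cos theta) with s the principal square root of the
   discriminant D = k^2 - 16 c^2 (3 - 4 c^2), c = cos theta; we need
   |k + s| >= 4 |c|.  If D < 0 then s is purely imaginary and
   |k + s|^2 = k^2 - D = 16 c^2 (3 - 4 c^2); as D < 0 and k^2 >= 8 force
   c^2 < 1/2, this is at least 16 c^2.  If D >= 0 then s = sqrt D is real and
   k + sqrt D < 4 |c| would force both c^2 > 1/2 and k < 8 |c| (1 - c^2),
   whence k^2 < 8. *)
From HB Require Import structures.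
From mathcomp Require Import all_boot all_order all_algebra.
From mathcomp Require Import complex.
From mathcomp Require Import reals trigo.
From mathcomp Require Import lra.
Import Order.TTheory GRing.Theory Num.Theory.
Local Open Scope ring_scope.
Local Open Scope complex_scope.

Definition disc {R : pzRingType} (k u : R) : R := k ^+ 2 - 16 * u * (3 - 4 * u).

Lemma disc_lt0_le (R : realFieldType) (k a : R) :
  8 <= k ^+ 2 -> 0 < a -> disc k (a ^+ 2) < 0 ->
  (4 * a) ^+ 2 <= k ^+ 2 - disc k (a ^+ 2).
Proof.
rewrite /disc exprMn => k8 a_gt0; set u := a ^+ 2 => D_lt0.
have u_gt0 : 0 < u by exact: exprn_gt0.
have u_lt_half : u < 1 / 2 by nra.
rewrite opprB addrC subrK; nra.
Qed.

Lemma le_add_sqrt_disc (R : rcfType) (k a : R) :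
  8 <= k ^+ 2 -> 0 <= k -> 0 < a -> a <= 1 -> 0 <= disc k (a ^+ 2) ->
  4 * a <= k + Num.sqrt (disc k (a ^+ 2)).
Proof.
move=> k8 k_ge0 a_gt0 a_le1 D_ge0.
set t := Num.sqrt _; have t_ge0 : 0 <= t by exact: sqrtr_ge0.
have tE : t ^+ 2 = disc k (a ^+ 2) by rewrite sqr_sqrtr.
rewrite /disc in tE; rewrite leNgt; apply/negP => lt_4a.
have a2_gt_half : 1 / 2 < a ^+ 2 by nra.
have k_lt : k < 8 * a * (1 - a ^+ 2) by nra.
have : k ^+ 2 < 64 * a ^+ 2 * (1 - a ^+ 2) ^+ 2 by nra.
nra.
Qed.

Lemma sqrtc_neg (R : rcfType) (x : R) :
  x < 0 -> sqrtc x%:C = 0 +i* Num.sqrt (- x).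
Proof.
move=> x_lt0; rewrite /sqrtc /= eqxx mul1r expr0n addr0 sqrtr_sqr ltr0_norm //.
by rewrite addNr mul0r sqrtr0; congr (_ +i* Num.sqrt _); lra.
Qed.

Lemma normcR (R : rcfType) (x : R) : `|x%:C| = `|x|%:C.
Proof. by rewrite normc_def /= expr0n addr0 sqrtr_sqr. Qed.

Lemma norm_div_ge1 (F : numFieldType) (z w : F) :
  w != 0 -> `|w| <= `|z| -> 1 <= `|z / w|.
Proof. by move=> w0 wz; rewrite normrM normfV ler_pdivlMr ?normr_gt0 ?mul1r. Qed.

Theorem lemma2 (R : realType) (k theta : R) :
  2 * Num.sqrt 2 <= k -> cos theta != 0 -> 1 <= `|y1 k theta|.
Proof.
move=> k_ge c_neq0; rewrite /y1; set c := cos theta.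
have k_ge0 : 0 <= k by apply: le_trans k_ge; rewrite mulr_ge0 ?sqrtr_ge0.
have k8 : 8 <= k ^+ 2.
  apply: le_trans (_ : (2 * Num.sqrt 2) ^+ 2 <= _); last first.
    by rewrite ler_pXn2r // nnegrE mulr_ge0 ?sqrtr_ge0.
  by rewrite exprMn sqr_sqrtr //; lra.
have c_gt0 : 0 < `|c| by rewrite normr_gt0.
have c_le1 : `|c| <= 1 by exact: cos_max.
rewrite -/(disc k (c ^+ 2)) -(real_normK (num_real c)).
apply: norm_div_ge1; first by rewrite fmorph_eq0 mulf_neq0 ?pnatr_eq0.
rewrite normcR normrM ger0_norm //.
case: (lerP 0 (disc k (`|c| ^+ 2))) => [D_ge0 | D_lt0].
- rewrite sqrtc_sqrtr /=; last by rewrite lecE /= eqxx.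
  rewrite -rmorphD normcR lecR [`|k + _|]ger0_norm ?addr_ge0 ?sqrtr_ge0 //.
  exact: le_add_sqrt_disc.
- rewrite sqrtc_neg // (_ : _ + _ = k +i* Num.sqrt (- disc k (`|c| ^+ 2))); last first.
    by apply/eqP; rewrite eq_complex /= addr0 add0r !eqxx.
  have tE : Num.sqrt (- disc k (`|c| ^+ 2)) ^+ 2 = - disc k (`|c| ^+ 2).
    by rewrite sqr_sqrtr // oppr_ge0 ltW.
  rewrite normc_def lecR /= -[4 * _]ger0_norm ?mulr_ge0 // -sqrtr_sqr.
  rewrite ler_sqrt ?addr_ge0 ?sqr_ge0 // tE.
  exact: disc_lt0_le k8 c_gt0 D_lt0.
Qed.
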